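(* Let $\tau=(s_1,a_1,s_2,a_2,\dots,s_T,a_T,s_{T+1})$ be a trajectory, and suppose that for each $t$ there is a real-valued reward variable $r_t$ and a binary optimality variable $\mathcal{O}_t\in\{0,1\}$, with joint density $$p(\tau,\mathcal{O}_{1:T},r_{1:T}) = p(s_1)\prod_{t=1}^{T} p(r_t\mid s_t,a_t)\,p(\mathcal{O}_t\mid r_t)\,p(s_{t+1}\mid s_t,a_t)\,p(a_t),$$ so that $p(\mathcal{O}_t\mid s_t,a_t)=\int p(\mathcal{O}_t\mid r_t)\,p(r_t\mid s_t,a_t)\,dr_t$ and $p(\tau)$ is obtained by marginalizing out all $\mathcal{O}_t$ and $r_t$. For each $t$, let $q(\cdot\mid r_t)$ be any probability distribution on $\{0,1\}$ (depending on the reward value $r_t$). Then $$\log p(\tau)\;\ge\;\log p(s_1)+\sum_{t=1}^{T}\Big[-D_{KL}\big(q(\mathcal{O}_t\mid r_t)\,\|\,p(\mathcal{O}_t\mid s_t,a_t)\big)+\log p(s_{t+1}\mid s_t,a_t)+\log p(a_t)\Big].$$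
   Context: $D_{KL}(q\|p)=\sum_{o\in\{0,1\}} q(o)\log\frac{q(o)}{p(o)}$ denotes the Kullback–Leibler divergence (the ''reverse'' KL, with the variational distribution $q$ in the first argument). The right-hand side is called the evidence lower bound (ELBO). *)

From HB Require Import structures.
From mathcomp Require Import all_boot all_order all_algebra.
From mathcomp Require Import all_classical all_reals all_analysis.
Set Implicit Arguments. Unset Strict Implicit. Unset Printing Implicit Defensive.
Import Order.TTheory GRing.Theory Num.Theory.
Local Open Scope ring_scope.
Local Open Scope ereal_scope.

Definition elog {R : realType} (x : \bar R) : \bar R :=
  match x with
  | r%:E => if (0 < r)%R then (ln r)%:E else -oo
  | _ => x
  end.

Definition KL {R : realType} (q p : bool -> R) : \bar R :=
  \sum_(o : bool)
    (if q o == 0%R then 0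
     else if (0 < p o)%R then (q o * ln (q o / p o))%:E else +oo).

Definition pOsa {R : realType} {S A : Type}
  (pr : S -> A -> R -> R) (pO : R -> bool -> R) (x : S) (u : A) (o : bool) : R :=
  fine (\int[lebesgue_measure]_(r in [set: R]) (pO r o * pr x u r)%:E).

(* Marginalisation of the joint density over (r_t, O_t), ..., (r_{t+n-1}, O_{t+n-1}),
   one variable pair at a time (iterated integral / sum):
   margFrom n t = \int dr_t \sum_{O_t} p(r_t|s_t,a_t) p(O_t|r_t) p(s_{t+1}|s_t,a_t) p(a_t)
                    * margFrom (n-1) (t+1). *)
Fixpoint margFrom {R : realType} {S A : Type}
  (ptr : S -> S -> A -> R) (pa : A -> R) (pr : S -> A -> R -> R)
  (pO : R -> bool -> R) (s : nat -> S) (a : nat -> A) (n t : nat) : \bar R :=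
  match n with
  | 0 => 1
  | n'.+1 =>
      \int[lebesgue_measure]_(r in [set: R])
        ((\sum_(o : bool)
            (pr (s t) (a t) r * pO r o * ptr (s t.+1) (s t) (a t) * pa (a t))%:E)
         * margFrom ptr pa pr pO s a n' t.+1)
  end.

Definition ptraj {R : realType} {S A : Type} (ps1 : S -> R)
  (ptr : S -> S -> A -> R) (pa : A -> R) (pr : S -> A -> R -> R)
  (pO : R -> bool -> R) (s : nat -> S) (a : nat -> A) (T : nat) : \bar R :=
  (ps1 (s 1%N))%:E * margFrom ptr pa pr pO s a T 1%N.

From HB Require Import structures.
From mathcomp Require Import all_boot all_order all_algebra.
From mathcomp Require Import all_classical all_reals all_analysis.
From mathcomp Require Import measurable_realfun ring lra.
Import Order.TTheory GRing.Theory Num.Theory.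
Local Open Scope ring_scope.
Local Open Scope ereal_scope.

(* Integrating out r_t and summing out O_t removes them from the joint density
   exactly, since p(O_t | r_t) sums to 1 and p(r_t | s_t, a_t) integrates to 1.
   Hence p(tau) = p(s_1) prod_t p(s_{t+1} | s_t, a_t) p(a_t), and log p(tau)
   equals the right-hand side without the KL terms. These terms are
   nonnegative by Gibbs' inequality (from ln x <= x - 1), so subtracting them
   only lowers the bound. *)

Section Gibbs.
Variable R : realType.

Lemma ln_le_subr1 [x : R] : (0 < x)%R -> (ln x <= x - 1)%R.
Proof.
move=> x0; have := @le_ln1Dx R (x - 1)%R.
by rewrite addrCA subrr addr0; apply; lra.
Qed.

Lemma sub_le_KL_summand (q p : R) : (0 <= q)%R -> (0 <= p)%R ->
  (q - p)%:E <= (if q == 0%R then 0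
                 else if (0 < p)%R then (q * ln (q / p))%:E else +oo).
Proof.
move=> q0 p0; have [->|qn0] := eqVneq q 0%R; first by rewrite lee_fin; lra.
have [p_gt0|] := ltP 0%R p; last by rewrite leey.
have q_gt0 : (0 < q)%R by rewrite lt_def qn0 q0.
have := ler_wpM2l q0 (ln_le_subr1 (divr_gt0 p_gt0 q_gt0)).
rewrite mulrBr mulr1 [(q * (p / q))%R]mulrC divfK // !ln_div ?posrE // lee_fin.
have -> : (q * (ln q - ln p) = - (q * (ln p - ln q)))%R by ring.
lra.
Qed.

Lemma KL_ge0 (q p : bool -> R) :
  (forall o, 0 <= q o)%R -> (q false + q true = 1)%R ->
  (forall o, 0 <= p o)%R -> (p false + p true <= 1)%R ->
  0 <= KL q p.
Proof.
move=> q0 q1 p0 p1; rewrite /KL big_bool.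
apply: (@le_trans _ _ ((q true - p true)%:E + (q false - p false)%:E)).
  by rewrite -EFinD lee_fin; lra.
by apply: leeD; apply: sub_le_KL_summand.
Qed.

End Gibbs.

Section ExtendedLog.
Variable R : realType.

Lemma elogM (x y : R) : (0 <= x)%R -> (0 <= y)%R ->
  elog (x * y)%:E = elog x%:E + elog y%:E.
Proof.
rewrite !le_eqVlt => /predU1P[<-|x0] /predU1P[<-|y0] /=;
  rewrite ?mul0r ?mulr0 ?ltxx ?x0 ?y0 //.
by rewrite mulr_gt0 // lnM ?posrE.
Qed.

Lemma elog_prod (m n : nat) (f : nat -> R) : (forall i, 0 <= f i)%R ->
  elog (\prod_(m <= i < n) f i)%:E = \sum_(m <= i < n) elog (f i)%:E.
Proof.
move=> f0.
suff [] : (0 <= \prod_(m <= i < n) f i)%R /\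
          elog (\prod_(m <= i < n) f i)%:E = \sum_(m <= i < n) elog (f i)%:E
  by [].
apply: (big_ind2 (fun x E => (0 <= x)%R /\ elog x%:E = E)).
- by rewrite /elog ltr01 ln1.
- move=> x1 x2 y1 y2 [x1_ge0 <-] [x2_ge0 <-].
  by rewrite mulr_ge0 // elogM.
- by move=> i _; split.
Qed.

End ExtendedLog.

Section TrajectoryModel.
Variables (R : realType) (S A : Type).
Variables (ptr : S -> S -> A -> R) (pa : A -> R).
Variables (pr : S -> A -> R -> R) (pO : R -> bool -> R).
Hypothesis ptr_ge0 : forall y x u, (0 <= ptr y x u)%R.
Hypothesis pa_ge0 : forall u, (0 <= pa u)%R.
Hypothesis pr_ge0 : forall x u r, (0 <= pr x u r)%R.
Hypothesis pr_meas : forall x u, measurable_fun [set: R] (pr x u).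
Hypothesis pr_norm : forall x u,
  \int[lebesgue_measure]_(r in [set: R]) (pr x u r)%:E = 1.
Hypothesis pO_ge0 : forall r o, (0 <= pO r o)%R.
Hypothesis pO_norm : forall r, (pO r false + pO r true)%R = 1%R.
Hypothesis pO_meas : forall o, measurable_fun [set: R] (fun r => pO r o).

Lemma margFromE (s : nat -> S) (a : nat -> A) (n t : nat) :
  margFrom ptr pa pr pO s a n t =
  (\prod_(t <= i < t + n) (ptr (s i.+1) (s i) (a i) * pa (a i)))%:E.
Proof.
elim: n t => [|n IHn] t /=; first by rewrite addn0 big_geq.
rewrite IHn -addSnnS [in RHS]big_ltn ?leq_addr //.
set c := (ptr _ _ _ * pa _)%R; set M := (\prod_(_ <= i < _) _)%R.
have cM_ge0 : (0 <= c * M)%R.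
  by rewrite mulr_ge0 ?prodr_ge0 // => *; apply: mulr_ge0.
transitivity (\int[lebesgue_measure]_(r in [set: R])
                ((c * M)%:E * (pr (s t) (a t) r)%:E)).
  apply: eq_integral => r _; rewrite big_bool /= -EFinD -!EFinM; congr EFin.
  have -> : pO r false = (1 - pO r true)%R by have := pO_norm r; lra.
  by rewrite /c; ring.
rewrite ge0_integralZl_EFin ?pr_norm ?mule1 //.
- by move=> r _; rewrite lee_fin.
- by apply/measurable_EFinP; exact: pr_meas.
Qed.

Lemma ptrajE (ps1 : S -> R) (s : nat -> S) (a : nat -> A) (T : nat) :
  ptraj ps1 ptr pa pr pO s a T =
  (ps1 (s 1%N) * \prod_(1 <= t < T.+1) (ptr (s t.+1) (s t) (a t) * pa (a t)))%:E.
Proof. by rewrite /ptraj margFromE add1n -EFinM. Qed.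

Let measurable_pO_pr (x : S) (u : A) (o : bool) :
  measurable_fun [set: R] (fun r : R => (pO r o * pr x u r)%:E).
Proof. by apply/measurable_EFinP; exact: measurable_funM. Qed.

Let pO_pr_ge0 x u o r : 0 <= (pO r o * pr x u r)%:E.
Proof. by rewrite lee_fin mulr_ge0. Qed.

Lemma pOsa_ge0 x u o : (0 <= pOsa pr pO x u o)%R.
Proof. by apply/fine_ge0/integral_ge0 => r _; exact: pO_pr_ge0. Qed.

Lemma integral_pO_pr_fin_num x u o :
  \int[lebesgue_measure]_(r in [set: R]) (pO r o * pr x u r)%:E \is a fin_num.
Proof.
rewrite ge0_fin_numE; last by apply: integral_ge0 => r _; exact: pO_pr_ge0.
apply: (@le_lt_trans _ _ 1); last exact: ltry.
rewrite -(pr_norm x u); apply: ge0_le_integral => //.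
- exact: (measurable_pO_pr x u o).
- by apply/measurable_EFinP; exact: pr_meas.
- move=> r _; rewrite lee_fin ler_piMl //.
  by have := pO_norm r; have := pO_ge0 r (~~ o); case: o => /=; lra.
Qed.

Lemma pOsa_norm x u : (pOsa pr pO x u false + pOsa pr pO x u true = 1)%R.
Proof.
rewrite /pOsa -fineD ?integral_pO_pr_fin_num // -ge0_integralD //.
- under eq_integral do rewrite -EFinD -mulrDl pO_norm mul1r.
  by rewrite pr_norm.
- exact: measurable_pO_pr.
- exact: measurable_pO_pr.
Qed.

End TrajectoryModel.

Theorem mainTheorem1 (R : realType) (S A : Type)
  (ps1 : S -> R) (ptr : S -> S -> A -> R) (pa : A -> R)
  (pr : S -> A -> R -> R) (pO : R -> bool -> R) (q : nat -> R -> bool -> R)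
  (T : nat) (s : nat -> S) (a : nat -> A)
  (ps1_ge0 : forall x, (0 <= ps1 x)%R)
  (ptr_ge0 : forall y x u, (0 <= ptr y x u)%R)
  (pa_ge0 : forall u, (0 <= pa u)%R)
  (pr_ge0 : forall x u r, (0 <= pr x u r)%R)
  (pr_meas : forall x u, measurable_fun [set: R] (pr x u))
  (pr_norm : forall x u,
     \int[lebesgue_measure]_(r in [set: R]) (pr x u r)%:E = 1)
  (pO_ge0 : forall r o, (0 <= pO r o)%R)
  (pO_norm : forall r, (pO r false + pO r true)%R = 1%R)
  (pO_meas : forall o, measurable_fun [set: R] (fun r => pO r o))
  (q_ge0 : forall t r o, (0 <= q t r o)%R)
  (q_norm : forall t r, (q t r false + q t r true)%R = 1%R) :
  forall rw : nat -> R,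
    elog (ptraj ps1 ptr pa pr pO s a T) >=
    elog (ps1 (s 1%N))%:E +
    \sum_(1 <= t < T.+1)
      (- KL (q t (rw t)) (pOsa pr pO (s t) (a t))
       + elog (ptr (s t.+1) (s t) (a t))%:E
       + elog (pa (a t))%:E).
Proof.
move=> rw.
have step_ge0 t : (0 <= ptr (s t.+1) (s t) (a t) * pa (a t))%R.
  exact: mulr_ge0.
rewrite ptrajE // elogM ?prodr_ge0 // elog_prod //.
apply: leeD => //; apply: lee_sum => t _.
rewrite elogM // -addeA geeDr // leeNl oppe0.
apply: KL_ge0 => [b | | b |].
- exact: q_ge0.
- exact: q_norm.
- exact: pOsa_ge0.
- by rewrite pOsa_norm.
Qed.
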